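(* Fix $L\neq0$. Consider the system, in time $\tau$, $$\xi''=2\xi^3+2h\xi+\frac{L^2}{\xi^3},\qquad \eta''=-2\eta^3+2h\eta+\frac{L^2}{\eta^3},$$ for positive functions $\xi,\eta$ subject to the constraints $$\xi'^2=\xi^4+2h\xi^2+2(c+1)-\frac{L^2}{\xi^2},\qquad \eta'^2=-\eta^4+2h\eta^2-2(c-1)-\frac{L^2}{\eta^2}$$ for some real constants $h,c$. Then there exist $h,c\in\mathbb R$ and a periodic solution $(\xi(\tau),\eta(\tau))$ of this system if and only if $L^2\le\big(\frac{16}{27}\big)^{3/2}$.
   Context: This is the separated form of the spatial Stark problem $\ddot x=-x/|q|^3$, $\ddot y=-y/|q|^3$, $\ddot z=-z/|q|^3+1$ in parabolic coordinates $x=\xi\eta\cos\phi$, $y=\xi\eta\sin\phi$, $z=\frac12(\xi^2-\eta^2)$, with $dt=(\xi^2+\eta^2)d\tau$, where $h$ is the energy $\frac12|\dot q|^2-\frac1{|q|}-z$, $L=x\dot y-y\dot x$ the $z$-component of angular momentum, and $c$ the separation constant. Constant solutions count as periodic. *)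

From Stdlib Require Import Reals.
From Coquelicot Require Import Coquelicot.
Open Scope R_scope.

Definition separated_stark_solution (L h c : R) (xi eta : R -> R) : Prop :=
  exists xi' eta' : R -> R,
    forall t : R,
      0 < xi t /\ 0 < eta t /\
      is_derive xi t (xi' t) /\ is_derive eta t (eta' t) /\
      is_derive xi' t (2 * xi t ^ 3 + 2 * h * xi t + L ^ 2 / xi t ^ 3) /\
      is_derive eta' t (- 2 * eta t ^ 3 + 2 * h * eta t + L ^ 2 / eta t ^ 3) /\
      xi' t ^ 2 = xi t ^ 4 + 2 * h * xi t ^ 2 + 2 * (c + 1) - L ^ 2 / xi t ^ 2 /\
      eta' t ^ 2 = - eta t ^ 4 + 2 * h * eta t ^ 2 - 2 * (c - 1) - L ^ 2 / eta t ^ 2.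

(* periodicity of the pair (constant solutions are periodic: any T > 0 works) *)
Definition periodic_pair (xi eta : R -> R) : Prop :=
  exists T : R, 0 < T /\ forall t : R, xi (t + T) = xi t /\ eta (t + T) = eta t.

(* At a maximum and a minimum of the periodic function xi we have xi' = 0, so max xi^2 and
   min xi^2 are roots of P(w) = w^3 + 2hw^2 + 2(c+1)w - L^2 (a double root when xi is
   constant, since then xi'' = 0).  Hence P(w) = (w - A)(w - B)(w - r) with A, B > 0 and
   ABr = L^2, so r > 0.  The eta-constraint says Q(eta^2) >= 0 for the cubic
   Q(v) = P(-v) + 4v, i.e. (v + A)(v + B)(v + r) <= 4v at v = eta^2 > 0.  By AM-GM the left
   side is at least (v + g)^3 with g^3 = ABr, and (v + g)^3 <= 4v forces g^2 <= 16/27.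
   Conversely, when L^4 <= (16/27)^3 there is an equilibrium: double roots of P and Q,
   found by the intermediate value theorem along an explicit one-parameter family. *)

From Stdlib Require Import Reals Lra Psatz.
From Coquelicot Require Import Coquelicot.
Open Scope R_scope.

Definition xi_cubic (h c L w : R) : R := w ^ 3 + 2 * h * w ^ 2 + 2 * (c + 1) * w - L ^ 2.
Definition xi_cubic_deriv (h c w : R) : R := 3 * w ^ 2 + 4 * h * w + 2 * (c + 1).
Definition eta_cubic (h c L w : R) : R := - w ^ 3 + 2 * h * w ^ 2 - 2 * (c - 1) * w - L ^ 2.
Definition eta_cubic_deriv (h c w : R) : R := - 3 * w ^ 2 + 4 * h * w - 2 * (c - 1).

Section Cubics.

Variables h c L : R.

Lemma xi_energy_cubic x : 0 < x ->
  x ^ 4 + 2 * h * x ^ 2 + 2 * (c + 1) - L ^ 2 / x ^ 2 = xi_cubic h c L (x ^ 2) / x ^ 2.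
Proof. intros Hx. unfold xi_cubic. field. lra. Qed.

Lemma xi_force_cubic x : 0 < x ->
  2 * x ^ 3 + 2 * h * x + L ^ 2 / x ^ 3
  = (x ^ 2 * xi_cubic_deriv h c (x ^ 2) - xi_cubic h c L (x ^ 2)) / x ^ 3.
Proof. intros Hx. unfold xi_cubic, xi_cubic_deriv. field. lra. Qed.

Lemma eta_energy_cubic y : 0 < y ->
  - y ^ 4 + 2 * h * y ^ 2 - 2 * (c - 1) - L ^ 2 / y ^ 2 = eta_cubic h c L (y ^ 2) / y ^ 2.
Proof. intros Hy. unfold eta_cubic. field. lra. Qed.

Lemma eta_force_cubic y : 0 < y ->
  - 2 * y ^ 3 + 2 * h * y + L ^ 2 / y ^ 3
  = (y ^ 2 * eta_cubic_deriv h c (y ^ 2) - eta_cubic h c L (y ^ 2)) / y ^ 3.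
Proof. intros Hy. unfold eta_cubic, eta_cubic_deriv. field. lra. Qed.

Lemma eta_cubic_xi_cubic_opp w : eta_cubic h c L w = xi_cubic h c L (- w) + 4 * w.
Proof. unfold eta_cubic, xi_cubic. ring. Qed.

End Cubics.

Lemma monic_cubic_two_roots p q s A B : A <> B ->
  A ^ 3 + p * A ^ 2 + q * A + s = 0 -> B ^ 3 + p * B ^ 2 + q * B + s = 0 ->
  exists r, forall w, w ^ 3 + p * w ^ 2 + q * w + s = (w - A) * (w - B) * (w - r).
Proof.
  intros HAB HA HB.
  assert (Hq : q = A * B - (A + B) * (A + B + p)).
  { assert (Hdiff : (A - B) * (A ^ 2 + A * B + B ^ 2 + p * (A + B) + q) = 0) by lra.
    apply Rmult_integral in Hdiff as [Hd | Hd]; lra. }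
  assert (Hs : s = - (A ^ 3 + p * A ^ 2 + q * A)) by lra.
  subst s q. exists (- p - A - B). intros w. ring.
Qed.

Lemma monic_cubic_double_root p q s A :
  A ^ 3 + p * A ^ 2 + q * A + s = 0 -> 3 * A ^ 2 + 2 * p * A + q = 0 ->
  exists r, forall w, w ^ 3 + p * w ^ 2 + q * w + s = (w - A) * (w - A) * (w - r).
Proof.
  intros HA HA'.
  assert (Hq : q = - 3 * A ^ 2 - 2 * p * A) by lra.
  assert (Hs : s = - (A ^ 3 + p * A ^ 2 + q * A)) by lra.
  subst s q. exists (- p - A - A). intros w. ring.
Qed.

Lemma xi_cubic_factor h c L A B :
  xi_cubic h c L A = 0 -> xi_cubic h c L B = 0 -> (A = B -> xi_cubic_deriv h c A = 0) ->
  exists r, forall w, xi_cubic h c L w = (w - A) * (w - B) * (w - r).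
Proof.
  unfold xi_cubic, xi_cubic_deriv. intros HA HB Hdouble.
  destruct (Req_dec A B) as [<- | HAB].
  - apply (monic_cubic_double_root (2 * h) (2 * (c + 1)) (- L ^ 2)); lra.
  - apply (monic_cubic_two_roots (2 * h) (2 * (c + 1)) (- L ^ 2)); lra.
Qed.

Section Periodic.

Variables (f : R -> R) (T : R).
Hypothesis T_gt0 : 0 < T.
Hypothesis f_periodic : forall t, f (t + T) = f t.

Lemma periodic_shift_IZR (k : Z) t : f (t + IZR k * T) = f t.
Proof.
  revert t. induction k as [| k IH | k IH] using Z.peano_ind; intros t.
  - now rewrite Rmult_0_l, Rplus_0_r.
  - rewrite succ_IZR. replace (t + (IZR k + 1) * T) with (t + IZR k * T + T) by ring.
    now rewrite f_periodic.
  - rewrite <- f_periodic, <- Z.sub_1_r, minus_IZR.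
    replace (t + (IZR k - 1) * T + T) with (t + IZR k * T) by ring.
    apply IH.
Qed.

Lemma periodic_representative t : exists s, 0 <= s <= T /\ f t = f s.
Proof.
  destruct (base_Int_part (t / T)) as [Hlow Hup].
  set (k := Int_part (t / T)) in *.
  exists (t - IZR k * T). split.
  - assert (Ht : t = t / T * T) by (field; lra).
    split; rewrite Ht at 1; nra.
  - rewrite <- (periodic_shift_IZR k (t - IZR k * T)). f_equal. ring.
Qed.

Hypothesis f_continuous : forall t, continuity_pt f t.

Lemma periodic_continuous_extrema : exists tm tM, forall t, f tm <= f t <= f tM.
Proof.
  assert (HT : 0 <= T) by lra.
  destruct (continuity_ab_min f 0 T HT (fun t _ => f_continuous t)) as [tm [Hm _]].
  destruct (continuity_ab_maj f 0 T HT (fun t _ => f_continuous t)) as [tM [HM _]].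
  exists tm, tM. intros t.
  destruct (periodic_representative t) as [s [Hs ->]].
  split; [apply Hm | apply HM]; exact Hs.
Qed.

End Periodic.

Lemma is_derive_eq0_at_max f t l : is_derive f t l -> (forall s, f s <= f t) -> l = 0.
Proof.
  intros Hd Hmax. apply is_derive_Reals in Hd.
  exact (deriv_maximum f (t - 1) (t + 1) t (exist _ l Hd) ltac:(lra) ltac:(lra)
           (fun s _ _ => Hmax s)).
Qed.

Lemma is_derive_eq0_at_min f t l : is_derive f t l -> (forall s, f t <= f s) -> l = 0.
Proof.
  intros Hd Hmin.
  assert (Hopp : - l = 0).
  { apply (is_derive_eq0_at_max (fun s => - f s) t); [exact (is_derive_opp f t l Hd) |].
    intros s. specialize (Hmin s). lra. }
  lra.
Qed.

Lemma cube_root_exists x : 0 < x -> exists y, 0 < y /\ y ^ 3 = x.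
Proof.
  intros Hx. exists (Rpower x (1 / 3)). split; [apply exp_pos |].
  rewrite <- Rpower_pow by apply exp_pos.
  rewrite Rpower_mult. replace (1 / 3 * INR 3) with 1 by (simpl; field).
  now apply Rpower_1.
Qed.

Lemma amgm3 x y z : 0 <= x -> 0 <= y -> 0 <= z -> 3 * x * y * z <= x ^ 3 + y ^ 3 + z ^ 3.
Proof.
  intros Hx Hy Hz.
  assert (Hsq : 0 <= (x - y) ^ 2 + (y - z) ^ 2 + (z - x) ^ 2).
  { pose proof (pow2_ge_0 (x - y)). pose proof (pow2_ge_0 (y - z)).
    pose proof (pow2_ge_0 (z - x)). lra. }
  assert (Hid : x ^ 3 + y ^ 3 + z ^ 3 - 3 * x * y * z
                = (x + y + z) * ((x - y) ^ 2 + (y - z) ^ 2 + (z - x) ^ 2) / 2) by field.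
  assert (0 <= (x + y + z) * ((x - y) ^ 2 + (y - z) ^ 2 + (z - x) ^ 2))
    by (apply Rmult_le_pos; lra).
  lra.
Qed.

Lemma shifted_cube_le_prod x y z v : 0 <= x -> 0 <= y -> 0 <= z -> 0 <= v ->
  (v + x * y * z) ^ 3 <= (v + x ^ 3) * (v + y ^ 3) * (v + z ^ 3).
Proof.
  intros Hx Hy Hz Hv.
  pose proof (amgm3 x y z Hx Hy Hz) as H1.
  assert (H2 : 3 * (x * y) * (y * z) * (z * x) <= (x * y) ^ 3 + (y * z) ^ 3 + (z * x) ^ 3)
    by (apply amgm3; apply Rmult_le_pos; assumption).
  assert (Hv2 : 0 <= v ^ 2) by apply pow2_ge_0.
  assert (Hexp : (v + x ^ 3) * (v + y ^ 3) * (v + z ^ 3) - (v + x * y * z) ^ 3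
    = (x ^ 3 + y ^ 3 + z ^ 3 - 3 * x * y * z) * v ^ 2
      + ((x * y) ^ 3 + (y * z) ^ 3 + (z * x) ^ 3 - 3 * (x * y) * (y * z) * (z * x)) * v)
    by ring.
  nra.
Qed.

Lemma shifted_cube_le_linear g v : 0 < g -> 0 < v -> (v + g) ^ 3 <= 4 * v -> g ^ 2 <= 16 / 27.
Proof.
  intros Hg Hv H. set (w := v + g) in *.
  assert (Hw4 : 4 * g <= w * (4 - w ^ 2)) by (unfold w in *; lra).
  assert (Hw : 0 < w ^ 2 < 4) by (unfold w in *; nra).
  assert (Hsq : 16 * g ^ 2 <= w ^ 2 * (4 - w ^ 2) ^ 2).
  { assert ((4 * g) ^ 2 <= (w * (4 - w ^ 2)) ^ 2) by (apply pow_incr; lra). nra. }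
  assert (Hmax : 256 / 27 - w ^ 2 * (4 - w ^ 2) ^ 2 = (w ^ 2 - 4 / 3) ^ 2 * (16 / 3 - w ^ 2))
    by field.
  assert (0 <= (w ^ 2 - 4 / 3) ^ 2 * (16 / 3 - w ^ 2))
    by (apply Rmult_le_pos; [apply pow2_ge_0 | lra]).
  lra.
Qed.

Lemma prod_shifted_le_linear_bound A B r v : 0 < A -> 0 < B -> 0 < r -> 0 < v ->
  (v + A) * (v + B) * (v + r) <= 4 * v -> (A * B * r) ^ 2 <= (16 / 27) ^ 3.
Proof.
  intros HA HB Hr Hv H.
  destruct (cube_root_exists A HA) as [x [Hx <-]].
  destruct (cube_root_exists B HB) as [y [Hy <-]].
  destruct (cube_root_exists r Hr) as [z [Hz <-]].
  assert (Hg : 0 < x * y * z) by (repeat apply Rmult_lt_0_compat; assumption).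
  assert (Hg2 : (x * y * z) ^ 2 <= 16 / 27).
  { apply (shifted_cube_le_linear _ v Hg Hv).
    apply (Rle_trans _ ((v + x ^ 3) * (v + y ^ 3) * (v + z ^ 3))); [| exact H].
    apply shifted_cube_le_prod; lra. }
  replace ((x ^ 3 * y ^ 3 * z ^ 3) ^ 2) with (((x * y * z) ^ 2) ^ 3) by ring.
  apply pow_incr. split; [apply pow2_ge_0 | exact Hg2].
Qed.

Lemma separated_stark_xi_critical L h c xi eta t :
  separated_stark_solution L h c xi eta -> is_derive xi t 0 -> xi_cubic h c L (xi t ^ 2) = 0.
Proof.
  intros [xi' [eta' Hs]] Hd0. destruct (Hs t) as (Hx & _ & Hd & _ & _ & _ & Hen & _).
  rewrite <- (is_derive_unique _ _ _ Hd), (is_derive_unique _ _ _ Hd0) in Hen.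
  rewrite xi_energy_cubic in Hen by exact Hx.
  replace (xi_cubic h c L (xi t ^ 2))
    with (xi_cubic h c L (xi t ^ 2) / xi t ^ 2 * xi t ^ 2) by (field; lra).
  rewrite <- Hen. ring.
Qed.

Lemma separated_stark_const_xi L h c xi eta x0 :
  separated_stark_solution L h c xi eta -> (forall t, xi t = x0) ->
  xi_cubic_deriv h c (x0 ^ 2) = 0.
Proof.
  intros Hsol Hconst.
  assert (Hd0 : forall t, is_derive xi t 0).
  { intros t. apply (is_derive_ext (fun _ => x0)); [intros s; now rewrite Hconst |].
    exact (is_derive_const x0 t). }
  pose proof (separated_stark_xi_critical L h c xi eta 0 Hsol (Hd0 0)) as Hroot.
  destruct Hsol as [xi' [eta' Hs]].
  assert (Hflat : forall t, xi' t = 0).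
  { intros t. destruct (Hs t) as (_ & _ & Hd & _).
    rewrite <- (is_derive_unique _ _ _ Hd). exact (is_derive_unique _ _ _ (Hd0 t)). }
  destruct (Hs 0) as (Hx & _ & _ & _ & Hdd & _).
  rewrite Hconst in Hx, Hdd, Hroot.
  assert (Hforce : 2 * x0 ^ 3 + 2 * h * x0 + L ^ 2 / x0 ^ 3 = 0).
  { rewrite <- (is_derive_unique _ _ _ Hdd), (Derive_ext xi' (fun _ => 0)) by exact Hflat.
    apply Derive_const. }
  rewrite (xi_force_cubic h c), Hroot in Hforce by exact Hx.
  assert (Hprod : x0 ^ 2 * xi_cubic_deriv h c (x0 ^ 2) = 0).
  { replace (x0 ^ 2 * xi_cubic_deriv h c (x0 ^ 2))
      with ((x0 ^ 2 * xi_cubic_deriv h c (x0 ^ 2) - 0) / x0 ^ 3 * x0 ^ 3) by (field; lra).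
    rewrite Hforce. ring. }
  apply Rmult_integral in Hprod as [H0 | H0]; [nra | exact H0].
Qed.

Lemma periodic_xi_cubic_factor L h c xi eta :
  separated_stark_solution L h c xi eta -> periodic_pair xi eta ->
  exists A B r, 0 < A /\ 0 < B /\ forall w, xi_cubic h c L w = (w - A) * (w - B) * (w - r).
Proof.
  intros Hsol [T [HT Hp]].
  pose proof Hsol as [xi' [eta' Hs]].
  assert (Hpos : forall t, 0 < xi t) by (intros t; apply Hs).
  assert (Hcont : forall t, continuity_pt xi t).
  { intros t. destruct (Hs t) as (_ & _ & Hd & _). apply is_derive_Reals in Hd.
    exact (derivable_continuous_pt xi t (exist _ _ Hd)). }
  destruct (periodic_continuous_extrema xi T HT (fun t => proj1 (Hp t)) Hcont)
    as [tm [tM Hext]].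
  assert (Hm : is_derive xi tm 0).
  { destruct (Hs tm) as (_ & _ & Hd & _).
    rewrite <- (is_derive_eq0_at_min xi tm (xi' tm) Hd); [exact Hd | apply Hext]. }
  assert (HM : is_derive xi tM 0).
  { destruct (Hs tM) as (_ & _ & Hd & _).
    rewrite <- (is_derive_eq0_at_max xi tM (xi' tM) Hd); [exact Hd | apply Hext]. }
  destruct (xi_cubic_factor h c L (xi tm ^ 2) (xi tM ^ 2)) as [r Hfac].
  - exact (separated_stark_xi_critical L h c xi eta tm Hsol Hm).
  - exact (separated_stark_xi_critical L h c xi eta tM Hsol HM).
  - intros Hsq. apply (separated_stark_const_xi L h c xi eta (xi tm) Hsol).
    intros t. pose proof (Hpos tm). pose proof (Hpos tM). pose proof (Hext t). nra.
  - exists (xi tm ^ 2), (xi tM ^ 2), r.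
    split; [apply pow_lt, Hpos |]. split; [apply pow_lt, Hpos | exact Hfac].
Qed.

Lemma periodic_separated_stark_bound L h c xi eta : L <> 0 ->
  separated_stark_solution L h c xi eta -> periodic_pair xi eta ->
  (L ^ 2) ^ 2 <= (16 / 27) ^ 3.
Proof.
  intros hL Hsol Hper.
  destruct (periodic_xi_cubic_factor L h c xi eta Hsol Hper) as (A & B & r & HA & HB & Hfac).
  destruct Hsol as [xi' [eta' Hs]].
  destruct (Hs 0) as (_ & Heta & _ & _ & _ & _ & _ & Hen).
  rewrite eta_energy_cubic in Hen by exact Heta.
  set (v := eta 0 ^ 2) in Hen.
  assert (Hv : 0 < v) by apply pow_lt, Heta.
  assert (HL2 : L ^ 2 = A * B * r).
  { pose proof (Hfac 0) as H0. unfold xi_cubic in H0. lra. }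
  assert (Hr : 0 < r).
  { assert (HLpos : 0 < L ^ 2).
    { pose proof (pow_nonzero L 2 hL). pose proof (pow2_ge_0 L). lra. }
    assert (HAB : 0 < A * B) by (apply Rmult_lt_0_compat; assumption).
    nra. }
  assert (Hq : 0 <= eta_cubic h c L v).
  { replace (eta_cubic h c L v) with (eta_cubic h c L v / v * v) by (field; lra).
    rewrite <- Hen. pose proof (pow2_ge_0 (eta' 0)). nra. }
  rewrite eta_cubic_xi_cubic_opp, Hfac in Hq.
  rewrite HL2. apply (prod_shifted_le_linear_bound A B r v); try assumption. nra.
Qed.

Lemma constant_separated_stark_solution L h c a b : 0 < a -> 0 < b ->
  xi_cubic h c L (a ^ 2) = 0 -> xi_cubic_deriv h c (a ^ 2) = 0 ->
  eta_cubic h c L (b ^ 2) = 0 -> eta_cubic_deriv h c (b ^ 2) = 0 ->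
  separated_stark_solution L h c (fun _ => a) (fun _ => b).
Proof.
  intros Ha Hb HP HP' HQ HQ'.
  exists (fun _ => 0), (fun _ => 0). intros t.
  rewrite (xi_force_cubic h c), (eta_force_cubic h c), xi_energy_cubic, eta_energy_cubic,
    HP, HP', HQ, HQ' by assumption.
  rewrite !Rmult_0_r, !Rminus_0_r, !Rdiv_0_l.
  do 2 (split; [assumption |]).
  do 4 (split; [exact (is_derive_const _ t) |]).
  split; ring.
Qed.

Definition equilibrium_L2 (z : R) : R := z * (1 - z ^ 4 / 16) ^ 2 / 2.

(* Eliminating h and c from the four double-root conditions at u (for xi^2) and v (for
   eta^2) leaves exactly u + v = z, u - v = z^3/4 and L^2 = equilibrium_L2 z. *)
Lemma equilibrium_double_roots L z : 0 < z < 2 -> L ^ 2 = equilibrium_L2 z ->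
  exists h c u v, 0 < u /\ 0 < v /\
    xi_cubic h c L u = 0 /\ xi_cubic_deriv h c u = 0 /\
    eta_cubic h c L v = 0 /\ eta_cubic_deriv h c v = 0.
Proof.
  intros Hz HL.
  set (u := (z + z ^ 3 / 4) / 2). set (v := (z - z ^ 3 / 4) / 2).
  assert (Hu : 0 < u) by (unfold u; nra).
  assert (Hv : 0 < v) by (unfold v; nra).
  set (h := v - L ^ 2 / (2 * v ^ 2)).
  exists h, ((- 3 * u ^ 2 - 4 * h * u) / 2 - 1), u, v.
  unfold xi_cubic, xi_cubic_deriv, eta_cubic, eta_cubic_deriv, h.
  rewrite HL. unfold equilibrium_L2, u, v in *.
  repeat split; try lra; field; lra.
Qed.

Lemma equilibrium_L2_surjective l : 0 < l -> l ^ 2 <= (16 / 27) ^ 3 ->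
  exists z, 0 < z < 2 /\ equilibrium_L2 z = l.
Proof.
  intros Hl Hl2.
  set (s := sqrt (4 / 3)).
  assert (Hs2 : s ^ 2 = 4 / 3) by (apply pow2_sqrt; lra).
  assert (Hs : 0 < s < 2) by (split; [apply sqrt_lt_R0; lra | nra]).
  assert (Hmax : equilibrium_L2 s ^ 2 = (16 / 27) ^ 3).
  { replace (equilibrium_L2 s ^ 2) with (s ^ 2 * (1 - (s ^ 2) ^ 2 / 16) ^ 4 / 4)
      by (unfold equilibrium_L2; field).
    rewrite Hs2. field. }
  assert (Hpos : 0 < equilibrium_L2 s).
  { unfold equilibrium_L2. assert (0 < 1 - (s ^ 2) ^ 2 / 16) by (rewrite Hs2; lra).
    assert (0 < (1 - s ^ 4 / 16) ^ 2).
    { apply pow_lt. replace (s ^ 4) with ((s ^ 2) ^ 2) by ring. lra. }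
    apply Rdiv_lt_0_compat; [apply Rmult_lt_0_compat |]; lra. }
  destruct (IVT_cor (fun z => equilibrium_L2 z - l) 0 s) as [z [Hz Hzl]].
  - unfold equilibrium_L2. reg.
  - lra.
  - assert (l <= equilibrium_L2 s) by nra. unfold equilibrium_L2 at 1. nra.
  - exists z. split; [| lra].
    destruct (Req_dec z 0) as [-> | Hz0]; [| lra].
    unfold equilibrium_L2 in Hzl. lra.
Qed.

Lemma Rpower_three_halves_sq x : 0 < x -> Rpower x (3 / 2) ^ 2 = x ^ 3.
Proof.
  intros Hx. rewrite <- Rpower_pow by apply exp_pos.
  rewrite Rpower_mult. replace (3 / 2 * INR 2) with (INR 3) by (simpl; field).
  now apply Rpower_pow.
Qed.

Lemma le_Rpower_three_halves x y : 0 < x -> 0 <= y ->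
  y <= Rpower x (3 / 2) <-> y ^ 2 <= x ^ 3.
Proof.
  intros Hx Hy. rewrite <- (Rpower_three_halves_sq x Hx).
  assert (HK : 0 < Rpower x (3 / 2)) by apply exp_pos.
  split; intros H; nra.
Qed.

Theorem lemma5p3 (L : R) (hL : L <> 0) :
  (exists (h c : R) (xi eta : R -> R),
      separated_stark_solution L h c xi eta /\ periodic_pair xi eta)
  <-> L ^ 2 <= Rpower (16 / 27) (3 / 2).
Proof.
  assert (HL2 : 0 < L ^ 2).
  { pose proof (pow_nonzero L 2 hL). pose proof (pow2_ge_0 L). lra. }
  rewrite le_Rpower_three_halves by lra.
  split.
  - intros (h & c & xi & eta & Hsol & Hper).
    exact (periodic_separated_stark_bound L h c xi eta hL Hsol Hper).
  - intros Hbound.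
    destruct (equilibrium_L2_surjective (L ^ 2) HL2 Hbound) as [z [Hz Hzl]].
    destruct (equilibrium_double_roots L z Hz (eq_sym Hzl))
      as (h & c & u & v & Hu & Hv & HP & HP' & HQ & HQ').
    exists h, c, (fun _ => sqrt u), (fun _ => sqrt v). split.
    + apply constant_separated_stark_solution; try (apply sqrt_lt_R0; assumption);
        rewrite pow2_sqrt by lra; assumption.
    + exists 1. split; [lra | now intros t].
Qed.
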